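(* $\operatorname{cov}(\mathcal N)\le\mathfrak b_3$ and $\operatorname{non}(\mathcal N)\ge\mathfrak d_3$.
   Context: Let $T^*$ and $\rho$ be as follows, by induction on $h\ge0$: $T^*\cap\omega^0=\{\langle\rangle\}$; $\rho(h)=\max(|T^*\cap\omega^h|,h+2)$, $\pi(h)=((h+1)^2\rho(h)^{h+1})^{\rho(h)^h}$, $a(h)=\pi(h)^{h+2}$, $M(h)=a(h)^2$, and each $s\in T^*\cap\omega^h$ has the $M(h)$ immediate successors $s^\frown\ell$, $\ell<M(h)$. Put $b(h)=(h+1)^2\rho(h)^{h+1}$. An $R_3$-parameter is a set $\mathcal E\subseteq\omega^\omega$ such that every $e\in\mathcal E$ satisfies $\lim_n e(n)=\infty$, $e(n)\le n$, $\lim_n(n-e(n))=\infty$, and there is $e'\in\mathcal E$ with $e(n)+1\le e'(n)$ for almost all $n$; moreover for every countable $\mathcal E'\subseteq\mathcal E$ there is $e\in\mathcal E$ with $e(n)\ge e'(n)$ for almost all $n$, for every $e'\in\mathcal E'$. Fix an $R_3$-parameter $\mathcal E$ of size $\aleph_1$. Let $\mathcal S=\{\psi\in\prod_h\mathcal P(b(h)):\ |\psi(h)|\le\rho(h)^h\ \forall h\}$, $\mathcal S_e=\{\phi\in\prod_h\mathcal P(b(h)):\ |\phi(h)|\le\rho(h)^{e(h)}\ \forall h\}$, and $\hat{\mathcal S}=\bigcup_{e\in\mathcal E}\mathcal S_e$. For $\psi\in\mathcal S$, $\phi\in\hat{\mathcal S}$ let $\psi\,R_3\,\phi$ iff $\phi(n)\not\subseteq\psi(n)$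 for all but finitely many $n$. Let $\mathfrak b_3$ be the least size of a set $\mathcal A\subseteq\mathcal S$ such that no $\phi\in\hat{\mathcal S}$ satisfies $\psi R_3\phi$ for all $\psi\in\mathcal A$, and $\mathfrak d_3$ the least size of $\mathcal D\subseteq\hat{\mathcal S}$ such that every $\psi\in\mathcal S$ has some $\phi\in\mathcal D$ with $\psi R_3\phi$. $\mathcal N$ is the null ideal. *)

From Stdlib Require Import Reals Arith List.
Import ListNotations.
Open Scope R_scope.

(* Given the number L = |T^* ∩ ω^h| of nodes at level h, the parameters at h. *)
Definition rho_of (h L : nat) : nat := Nat.max L (h + 2).
Definition b_of (h L : nat) : nat := ((h + 1) ^ 2 * rho_of h L ^ (h + 1))%nat.
Definition pi_of (h L : nat) : nat := (b_of h L ^ (rho_of h L ^ h))%nat.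
Definition a_of (h L : nat) : nat := (pi_of h L ^ (h + 2))%nat.
Definition M_of (h L : nat) : nat := (a_of h L ^ 2)%nat.

(* levsize h = |T^* ∩ ω^h|: the root is the only node of level 0 and each
   node of level h has exactly M(h) immediate successors. *)
Fixpoint levsize (h : nat) : nat :=
  match h with
  | O => 1%nat
  | S k => (levsize k * M_of k (levsize k))%nat
  end.

Definition rho (h : nat) : nat := rho_of h (levsize h).
Definition piT (h : nat) : nat := pi_of h (levsize h).
Definition aT (h : nat) : nat := a_of h (levsize h).
Definition M (h : nat) : nat := M_of h (levsize h).
Definition b (h : nat) : nat := b_of h (levsize h).

Definition Tstar (s : list nat) : Prop :=
  forall i, (i < length s)%nat -> (nth i s 0 < M i)%nat.

(* An element of prod_h P(b(h)) is represented by its characteristic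
   functions: psi h i = true iff i ∈ psi(h); we require psi(h) ⊆ b(h). *)
Definition slalom := nat -> nat -> bool.

Definition in_prod_Pb (psi : slalom) : Prop :=
  forall h i, psi h i = true -> (i < b h)%nat.

Definition card_at (psi : slalom) (h : nat) : nat :=
  length (filter (psi h) (seq 0 (b h))).

Definition Sset (psi : slalom) : Prop :=
  in_prod_Pb psi /\ forall h, (card_at psi h <= rho h ^ h)%nat.

Definition S_e (e : nat -> nat) (phi : slalom) : Prop :=
  in_prod_Pb phi /\ forall h, (card_at phi h <= rho h ^ e h)%nat.

Definition Shat (E : (nat -> nat) -> Prop) (phi : slalom) : Prop :=
  exists e, E e /\ S_e e phi.

Definition subset_at (phi psi : slalom) (n : nat) : Prop :=
  forall i, phi n i = true -> psi n i = true.

Definition R3 (psi phi : slalom) : Prop :=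
  exists N, forall n, (N <= n)%nat -> ~ subset_at phi psi n.

Definition countable_set {T : Type} (X : T -> Prop) : Prop :=
  exists g : nat -> T, forall x, X x -> exists n, g n = x.

Definition tends_to_infty (f : nat -> nat) : Prop :=
  forall m, exists N, forall n, (N <= n)%nat -> (m <= f n)%nat.

Definition eventually_le (f g : nat -> nat) : Prop :=
  exists N, forall n, (N <= n)%nat -> (f n <= g n)%nat.

Definition R3_parameter (E : (nat -> nat) -> Prop) : Prop :=
  (forall e, E e ->
     tends_to_infty e /\
     (forall n, (e n <= n)%nat) /\
     tends_to_infty (fun n => (n - e n)%nat) /\
     (exists e', E e' /\ eventually_le (fun n => S (e n)) e')) /\
  (forall E' : (nat -> nat) -> Prop,
     (forall e', E' e' -> E e') -> countable_set E' ->
     exists e, E e /\ forall e', E' e' -> eventually_le e' e).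

(* |E| = aleph_1: E is uncountable and carries a strict linear order all of
   whose proper initial segments are countable. *)
Definition size_aleph1 {T : Type} (E : T -> Prop) : Prop :=
  ~ countable_set E /\
  exists lt : T -> T -> Prop,
    (forall x, ~ lt x x) /\
    (forall x y z, lt x y -> lt y z -> lt x z) /\
    (forall x y, E x -> E y -> x <> y -> lt x y \/ lt y x) /\
    (forall x, E x -> countable_set (fun y => E y /\ lt y x)).

Definition extends (s : list bool) (x : nat -> bool) : Prop :=
  forall i, (i < length s)%nat -> x i = nth i s false.

Definition null_set (X : (nat -> bool) -> Prop) : Prop :=
  forall eps : R, 0 < eps ->
    exists s : nat -> list bool,
      (forall x, X x -> exists n, extends (s n) x) /\
      (forall N, sum_f_R0 (fun n => (/ 2) ^ length (s n)) N <= eps).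

(* A ⊆ S witnesses b_3: no phi ∈ Ŝ R3-bounds all of A. *)
Definition R3_unbounded (E : (nat -> nat) -> Prop) (A : slalom -> Prop) : Prop :=
  (forall psi, A psi -> Sset psi) /\
  ~ (exists phi, Shat E phi /\ forall psi, A psi -> R3 psi phi).

From Stdlib Require Import Reals Arith List Lia Lra Classical.
Import ListNotations.

(* For x in 2^omega let phi_x be the slalom whose n-th value is the singleton
   {number coded by the first floor(log2 b(n)) bits of x}; phi_x lies in every
   S_e.  For psi in S, the set of x with phi_x(n) included in psi(n) has measure
   |psi(n)| / 2^floor(log2 b(n)) <= 2/((n+1)(n+2)), which is summable, so by
   Borel-Cantelli {x | not psi R3 phi_x} is null.  Hence the null sets attached
   to the members of an R3-unbounded A cover 2^omega, and a non-null X contains,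
   for every psi in S, some x with psi R3 phi_x. *)

Local Open Scope nat_scope.

Fixpoint nat_of_bits (t : list bool) : nat :=
  match t with [] => 0 | a :: t => Nat.b2n a + 2 * nat_of_bits t end.

Fixpoint bits_of_nat (L j : nat) : list bool :=
  match L with 0 => [] | S L => Nat.testbit j 0 :: bits_of_nat L (j / 2) end.

Lemma length_bits_of_nat L j : length (bits_of_nat L j) = L.
Proof. revert j; induction L; intros j; simpl; auto. Qed.

Lemma bits_of_nat_of_bits t L : length t = L -> bits_of_nat L (nat_of_bits t) = t.
Proof.
  intros <-. induction t as [|a t IH]; [reflexivity|].
  cbn [length bits_of_nat nat_of_bits].
  now rewrite Nat.add_b2n_double_bit0, Nat.add_b2n_double_div2, IH.
Qed.

Lemma nat_of_bits_lt t : nat_of_bits t < 2 ^ length t.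
Proof. induction t as [|a t IH]; simpl; auto. pose proof (Nat.b2n_le_1 a). lia. Qed.

Lemma length_filter_eqb_le1 c l :
  NoDup l -> length (filter (fun i => i =? c) l) <= 1.
Proof.
  intros Hl. apply (NoDup_incl_length (l' := [c]) (NoDup_filter _ Hl)).
  intros i Hi. apply filter_In in Hi as [_ Hi]. apply Nat.eqb_eq in Hi. now left.
Qed.

Lemma rho_ge n : n + 2 <= rho n.
Proof. unfold rho, rho_of. lia. Qed.

Definition log_b (n : nat) : nat := Nat.log2 (b n).

Lemma log_b_spec n : 2 ^ log_b n <= b n < 2 * 2 ^ log_b n.
Proof.
  assert (Hb : 0 < b n).
  { pose proof (rho_ge n). unfold b, b_of. fold (rho n).
    apply Nat.mul_pos_pos; apply Nat.neq_0_lt_0, Nat.pow_nonzero; lia. }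
  exact (Nat.log2_spec (b n) Hb).
Qed.

Lemma card_bound_log_b c n :
  c <= rho n ^ n -> c * ((n + 1) * (n + 2)) <= 2 * 2 ^ log_b n.
Proof.
  intros Hc. pose proof (log_b_spec n) as [_ Hlt]. pose proof (rho_ge n).
  assert (Hb : b n = rho n ^ n * ((n + 1) * ((n + 1) * rho n))).
  { unfold b, b_of. fold (rho n). rewrite Nat.pow_add_r, Nat.pow_1_r, Nat.pow_2_r. ring. }
  enough (c * ((n + 1) * (n + 2)) <= b n) by lia.
  rewrite Hb. apply Nat.mul_le_mono; [exact Hc|]. nia.
Qed.

Definition prefix_code (n : nat) (x : nat -> bool) : nat :=
  nat_of_bits (map x (seq 0 (log_b n))).

Definition code_slalom (x : nat -> bool) : slalom :=
  fun n i => i =? prefix_code n x.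

Lemma prefix_code_lt n x : prefix_code n x < b n.
Proof.
  pose proof (nat_of_bits_lt (map x (seq 0 (log_b n)))) as H.
  rewrite length_map, length_seq in H. pose proof (log_b_spec n). unfold prefix_code. lia.
Qed.

Lemma code_slalom_S_e e x : S_e e (code_slalom x).
Proof.
  split.
  - intros h i Hi. apply Nat.eqb_eq in Hi as ->. apply prefix_code_lt.
  - intros h. transitivity 1; [apply length_filter_eqb_le1, seq_NoDup|].
    pose proof (rho_ge h). apply Nat.neq_0_lt_0, Nat.pow_nonzero. lia.
Qed.

Local Close Scope nat_scope.

Definition weight (l : list (list bool)) : R :=
  fold_right Rplus 0 (map (fun t => (/ 2) ^ length t) l).

Lemma weight_app l1 l2 : weight (l1 ++ l2) = weight l1 + weight l2.
Proof. induction l1 as [|t l1 IH]; unfold weight in *; simpl; [|rewrite IH]; ring. Qed.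

Lemma weight_nonneg l : 0 <= weight l.
Proof.
  induction l as [|t l IH]; unfold weight in *; simpl; [lra|].
  pose proof (pow_le (/ 2) (length t) ltac:(lra)). lra.
Qed.

Lemma weight_uniform_length l L :
  (forall t, In t l -> length t = L) -> weight l = INR (length l) * (/ 2) ^ L.
Proof.
  induction l as [|t l IH]; intros H; unfold weight in *; cbn [map fold_right length].
  - simpl; ring.
  - rewrite IH, (H t), S_INR by auto with datatypes. ring.
Qed.

Lemma partial_sum_nth_le_weight l N : (N < length l)%nat ->
  sum_f_R0 (fun k => (/ 2) ^ length (nth k l [])) N <= weight l.
Proof.
  revert N; induction l as [|t l IH]; intros N HN; simpl in HN; [lia|].
  pose proof (weight_nonneg l).
  change (weight (t :: l)) with ((/ 2) ^ length t + weight l).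
  destruct N as [|N].
  - simpl. lra.
  - rewrite decomp_sum by lia. specialize (IH N ltac:(lia)). simpl. lra.
Qed.

Definition blocks_upto (D : nat -> list (list bool)) (N : nat) :=
  concat (map D (seq 0 (S N))).

Lemma blocks_upto_S D N : blocks_upto D (S N) = blocks_upto D N ++ D (S N).
Proof.
  unfold blocks_upto. rewrite (seq_S (S N)), map_app, concat_app. simpl.
  now rewrite app_nil_r.
Qed.

Lemma blocks_upto_prefix D k N : (k <= N)%nat ->
  exists r, blocks_upto D N = blocks_upto D k ++ r.
Proof.
  induction 1 as [|N _ [r Hr]]; [exists []; now rewrite app_nil_r|].
  exists (r ++ D (S N)). now rewrite blocks_upto_S, Hr, app_assoc.
Qed.

Lemma In_blocks_upto D n N t : (n <= N)%nat -> In t (D n) -> In t (blocks_upto D N).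
Proof.
  intros HnN Ht. apply in_concat. exists (D n). split; [|exact Ht].
  apply in_map, in_seq. lia.
Qed.

Lemma weight_blocks_upto D N :
  weight (blocks_upto D N) = sum_f_R0 (fun n => weight (D n)) N.
Proof.
  induction N as [|N IH].
  - unfold blocks_upto. simpl. now rewrite app_nil_r.
  - now rewrite blocks_upto_S, weight_app, IH.
Qed.

Section NonemptyBlocks.

Variable D : nat -> list (list bool).
Hypothesis D_nonempty : forall n, D n <> [].

Lemma length_blocks_upto N : (N < length (blocks_upto D N))%nat.
Proof.
  induction N as [|N IH].
  - unfold blocks_upto. simpl. rewrite app_nil_r.
    destruct (D 0%nat) eqn:E; [now contradiction (D_nonempty 0)|simpl; lia].
  - rewrite blocks_upto_S, length_app.
    destruct (D (S N)) eqn:E; [now contradiction (D_nonempty (S N))|simpl; lia].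
Qed.

Lemma nth_blocks_upto k N : (k <= N)%nat ->
  nth k (blocks_upto D N) [] = nth k (blocks_upto D k) [].
Proof.
  intros HkN. destruct (blocks_upto_prefix D k N HkN) as [r ->].
  apply app_nth1, length_blocks_upto.
Qed.

End NonemptyBlocks.

(* Padding block n with one string of measure (1/2)^(n+K) makes every block
   nonempty, so that the diagonal enumeration k |-> k-th string of blocks 0..k
   reaches every string. *)
Lemma enumerate_blocks (C : nat -> list (list bool)) (K : nat) :
  exists s : nat -> list bool,
    (forall n t, In t (C n) -> exists k, s k = t) /\
    (forall N, sum_f_R0 (fun k => (/ 2) ^ length (s k)) N
               <= sum_f_R0 (fun n => weight (C n)) N + 2 * (/ 2) ^ K).
Proof.
  set (D n := C n ++ [repeat false (n + K)]).
  assert (HD : forall n, D n <> []) by (intros n; unfold D; now destruct (C n)).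
  exists (fun k => nth k (blocks_upto D k) []). split.
  - intros n t Ht.
    assert (Hin : In t (blocks_upto D n))
      by (apply (In_blocks_upto D n n); [lia | apply in_or_app; now left]).
    destruct (In_nth _ t [] Hin) as [k [Hk <-]]. exists k.
    rewrite <- (nth_blocks_upto D HD k (Nat.max k n)) by lia.
    destruct (blocks_upto_prefix D n (Nat.max k n)) as [r ->]; [lia|].
    now rewrite app_nth1.
  - intros N.
    rewrite (sum_eq _ (fun k => (/ 2) ^ length (nth k (blocks_upto D N) [])))
      by (intros k Hk; now rewrite (nth_blocks_upto D HD k N)).
    eapply Rle_trans; [apply partial_sum_nth_le_weight, length_blocks_upto, HD|].
    rewrite weight_blocks_upto.
    rewrite (sum_eq _ (fun n => weight (C n) + (/ 2) ^ n * (/ 2) ^ K)).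
    2:{ intros n _. unfold D. rewrite weight_app. unfold weight at 2. simpl.
        rewrite repeat_length, pow_add. ring. }
    rewrite sum_plus, <- scal_sum.
    assert (Hgeom : sum_f_R0 (pow (/ 2)) N <= 2).
    { rewrite tech3 by lra. pose proof (pow_le (/ 2) (S N) ltac:(lra)).
      unfold Rdiv. lra. }
    pose proof (pow_le (/ 2) K ltac:(lra)). nra.
Qed.

Lemma null_set_mono (X Y : (nat -> bool) -> Prop) :
  (forall x, Y x -> X x) -> null_set X -> null_set Y.
Proof.
  intros HYX HX eps Heps. destruct (HX eps Heps) as [s [Hs Hsum]].
  exists s. split; [|exact Hsum]. intros x Hx. exact (Hs x (HYX x Hx)).
Qed.

Lemma null_set_of_block_covers (X : (nat -> bool) -> Prop) :
  (forall eps, 0 < eps -> exists C : nat -> list (list bool),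
     (forall x, X x -> exists n t, In t (C n) /\ extends t x) /\
     (forall N, sum_f_R0 (fun n => weight (C n)) N <= eps)) ->
  null_set X.
Proof.
  intros Hcov eps Heps.
  destruct (Hcov (eps / 2)) as [C [HXC HC]]; [lra|].
  destruct (pow_lt_1_zero (/ 2) ltac:(rewrite Rabs_pos_eq; lra) (eps / 4) ltac:(lra))
    as [K HK].
  specialize (HK K (le_n K)). rewrite Rabs_pos_eq in HK by (apply pow_le; lra).
  destruct (enumerate_blocks C K) as [s [Hs Hsum]].
  exists s. split.
  - intros x Hx. destruct (HXC x Hx) as [n [t [Ht Hxt]]].
    destruct (Hs n t Ht) as [k <-]. now exists k.
  - intros N. specialize (Hsum N). specialize (HC N). lra.
Qed.

Definition hits_infinitely_often (C : nat -> list (list bool)) (x : nat -> bool) : Prop :=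
  forall m, exists n t, (m <= n)%nat /\ In t (C n) /\ extends t x.

Lemma null_set_limsup (C : nat -> list (list bool)) :
  (forall eps, 0 < eps ->
     exists m, forall N, sum_f_R0 (fun n => weight (C (m + n)%nat)) N <= eps) ->
  null_set (hits_infinitely_often C).
Proof.
  intros Htail. apply null_set_of_block_covers. intros eps Heps.
  destruct (Htail eps Heps) as [m Hm].
  exists (fun n => C (m + n)%nat). split; [|exact Hm].
  intros x Hx. destruct (Hx m) as [n [t [Hmn Ht]]].
  exists (n - m)%nat, t. now replace (m + (n - m))%nat with n by lia.
Qed.

Lemma telescoping_tails_small (w : nat -> R) :
  (forall n, w n <= 2 / (INR n + 1) - 2 / (INR n + 2)) ->
  forall eps, 0 < eps ->
    exists m, forall N, sum_f_R0 (fun n => w (m + n)%nat) N <= eps.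
Proof.
  intros Hw eps Heps.
  destruct (archimed_cor1 (eps / 2)) as [m [Hm Hm0]]; [lra|].
  exists m. intros N.
  assert (Htele : sum_f_R0 (fun n => w (m + n)%nat) N
                  <= 2 / (INR m + 1) - 2 / (INR (m + N) + 2)).
  { induction N as [|N IH]; simpl.
    - rewrite Nat.add_0_r. apply Hw.
    - specialize (Hw (m + S N)%nat).
      rewrite Nat.add_succ_r, S_INR in *.
      replace (INR (m + N) + 1 + 1) with (INR (m + N) + 2) in Hw by ring. lra. }
  assert (0 < INR m) by (apply lt_0_INR; lia).
  assert (/ (INR m + 1) <= / INR m) by (apply Rinv_le_contravar; lra).
  assert (0 < / (INR (m + N) + 2)) by (apply Rinv_0_lt_compat; pose proof (pos_INR (m + N)); lra).
  unfold Rdiv in *. lra.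
Qed.

Lemma card_weight_le_telescoping (c L n : nat) :
  (c * ((n + 1) * (n + 2)) <= 2 * 2 ^ L)%nat ->
  INR c * (/ 2) ^ L <= 2 / (INR n + 1) - 2 / (INR n + 2).
Proof.
  intros H. apply le_INR in H.
  rewrite !mult_INR, pow_INR, !plus_INR in H. simpl INR in H.
  replace (1 + 1) with 2 in H by ring.
  rewrite pow_inv.
  set (y := INR n) in *. set (p := 2 ^ L) in *.
  assert (Hp : 0 < p) by (apply pow_lt; lra).
  assert (Hy : 0 <= y) by apply pos_INR.
  replace (INR c * / p) with ((INR c * ((y + 1) * (y + 2))) * / (p * ((y + 1) * (y + 2))))
    by (field; lra).
  replace (2 / (y + 1) - 2 / (y + 2)) with ((2 * p) * / (p * ((y + 1) * (y + 2))))
    by (field; lra).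
  apply Rmult_le_compat_r; [left; apply Rinv_0_lt_compat; nra | lra].
Qed.

Lemma extends_prefix (x : nat -> bool) L : extends (map x (seq 0 L)) x.
Proof.
  intros i Hi. rewrite length_map, length_seq in Hi.
  rewrite nth_indep with (d' := x 0%nat) by (rewrite length_map, length_seq; lia).
  now rewrite map_nth, seq_nth.
Qed.

Definition code_block (psi : slalom) (n : nat) : list (list bool) :=
  map (bits_of_nat (log_b n)) (filter (psi n) (seq 0 (b n))).

Lemma weight_code_block psi n : (card_at psi n <= rho n ^ n)%nat ->
  weight (code_block psi n) <= 2 / (INR n + 1) - 2 / (INR n + 2).
Proof.
  intros Hc. rewrite (weight_uniform_length _ (log_b n)).
  - unfold code_block. rewrite length_map. apply card_weight_le_telescoping, card_bound_log_b, Hc.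
  - intros t Ht. apply in_map_iff in Ht as [j [<- _]]. apply length_bits_of_nat.
Qed.

Lemma not_R3_code_slalom psi x :
  ~ R3 psi (code_slalom x) -> hits_infinitely_often (code_block psi) x.
Proof.
  intros Hx m.
  assert (Hhit : exists n, (m <= n)%nat /\ psi n (prefix_code n x) = true).
  { apply NNPP. intros Hno. apply Hx. exists m. intros n Hmn Hsub.
    apply Hno. exists n. split; [exact Hmn|]. apply Hsub, Nat.eqb_refl. }
  destruct Hhit as [n [Hmn Hpsi]].
  exists n, (map x (seq 0 (log_b n))). split; [exact Hmn|]. split; [|apply extends_prefix].
  apply in_map_iff. exists (prefix_code n x). split.
  - apply bits_of_nat_of_bits. now rewrite length_map, length_seq.
  - apply filter_In. split; [|exact Hpsi].
    apply in_seq. pose proof (prefix_code_lt n x). lia.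
Qed.

Lemma null_set_not_R3_code_slalom psi :
  Sset psi -> null_set (fun x => ~ R3 psi (code_slalom x)).
Proof.
  intros [_ Hcard].
  apply (null_set_mono (hits_infinitely_often (code_block psi))); [apply not_R3_code_slalom|].
  apply null_set_limsup, (telescoping_tails_small (fun n => weight (code_block psi n))).
  intros n. apply weight_code_block, Hcard.
Qed.

Lemma uncountable_inhabited {T : Type} (t0 : T) (E : T -> Prop) :
  ~ countable_set E -> exists e, E e.
Proof.
  intros Hunc. apply NNPP. intros Hempty. apply Hunc.
  exists (fun _ => t0). intros e He. contradiction Hempty. now exists e.
Qed.

Theorem lemma2 (E : (nat -> nat) -> Prop)
  (HE : R3_parameter E) (HE1 : size_aleph1 E) :
  (forall A : slalom -> Prop, R3_unbounded E A ->
     exists F : {psi : slalom | A psi} -> ((nat -> bool) -> Prop),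
       (forall a, null_set (F a)) /\ (forall x, exists a, F a x)) /\
  (forall X : (nat -> bool) -> Prop, ~ null_set X ->
     exists f : {x : nat -> bool | X x} -> slalom,
       (forall x, Shat E (f x)) /\
       (forall psi, Sset psi -> exists x, R3 psi (f x))).
Proof.
  destruct (uncountable_inhabited (fun n => n) E (proj1 HE1)) as [e He].
  assert (Hhat : forall x, Shat E (code_slalom x))
    by (intros x; exists e; split; [exact He | apply code_slalom_S_e]).
  split.
  - intros A [HA Hunb].
    exists (fun a x => ~ R3 (proj1_sig a) (code_slalom x)). split.
    + intros [psi Hpsi]. apply null_set_not_R3_code_slalom, HA, Hpsi.
    + intros x. apply NNPP. intros Hcov. apply Hunb.
      exists (code_slalom x). split; [apply Hhat|].
      intros psi Hpsi. apply NNPP. intros Hnot. apply Hcov. now exists (exist _ psi Hpsi).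
  - intros X HX. exists (fun x => code_slalom (proj1_sig x)). split; [intros; apply Hhat|].
    intros psi Hpsi. apply NNPP. intros Hnone. apply HX.
    eapply null_set_mono; [|exact (null_set_not_R3_code_slalom psi Hpsi)].
    intros x Hx HR. apply Hnone. now exists (exist _ x Hx).
Qed.
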